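(* Let $p$ be a prime number and let $1\to F\to H\to\bar H\to1$ be an exact sequence of finite groups such that $\bar H$ is abelian and generated by $r$ elements. Suppose that $|F|\le B\cdot|F_p|^e$ for some positive constants $B$ and $e$, where $F_p$ is a $p$-Sylow subgroup of $F$, and that $F$ is generated by $s$ elements. Then $H$ contains a characteristic abelian subgroup of order coprime to $p$ and index at most $B^{r+s}\cdot|H_p|^{e(r+s)+1}$, where $H_p$ is a $p$-Sylow subgroup of $H$. *)

From HB Require Import structures.
From mathcomp Require Import all_boot all_order all_algebra all_fingroup all_solvable.
From mathcomp Require Import reals exp.
Set Implicit Arguments. Unset Strict Implicit. Unset Printing Implicit Defensive.

Definition generated_by_at_most (gT : finGroupType) (G : {set gT}) (n : nat) : Prop :=
  exists X : {set gT}, #|X| <= n /\ <<X>>%g = G.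

From HB Require Import structures.
From mathcomp Require Import all_boot all_order all_algebra all_fingroup all_solvable.
From mathcomp Require Import reals exp.
Import Order.TTheory GRing.Theory Num.Theory.
Set Implicit Arguments. Unset Strict Implicit. Unset Printing Implicit Defensive.

(* Lifts of generators of H/F together with generators of F give r + s
   generators of H.  As H' <= F, each conjugacy class of H lies in a coset of F,
   so each generator has a centraliser of index at most |F|, and Z(H), the
   intersection of these centralisers, has index at most |F|^(r+s).  In the
   abelian group Z(H) the p'-core is a characteristic p'-Hall subgroup, of
   index |Z(H)|_p <= |H_p|; finally |F| <= B |F_p|^e <= B |H_p|^e. *)

Section CentreIndex.

Variable gT : finGroupType.
Implicit Types (H F : {group gT}) (X : {set gT}).

Lemma index_cent_le H X m :
  {in X, forall x, #|(x ^: H)%g| <= m} -> #|H : 'C_H(X)|%g <= m ^ #|X|.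
Proof.
move=> leX; rewrite cardE.
have -> : 'C_H(X)%g = 'C_H([set:: enum X])%g.
  by congr ('C_H(_))%g; apply/setP => x; rewrite inE mem_enum.
have {leX} : {in enum X, forall x, #|(x ^: H)%g| <= m}.
  by move=> x; rewrite mem_enum; apply: leX.
elim: (enum X) => [|x s IHs] les.
  have sHC : H \subset 'C(set0)%g by rewrite centsC sub0set.
  by rewrite set_nil (setIidPl sHC) indexgg.
have les' : {in s, forall y, #|(y ^: H)%g| <= m}.
  by move=> y ys; apply: les; rewrite inE ys orbT.
have -> : 'C_H([set:: x :: s])%g = 'C_('C_H([set:: s]))[x]%g.
  by rewrite set_cons centU cent_set1 setIA setIAC.
rewrite -(Lagrange_index (subsetIl H _) (subsetIl _ 'C[x]%g)) /= expnS mulnC.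
rewrite leq_mul ?(IHs les') // index_cent1.
apply: leq_trans (les x (mem_head _ _)).
exact/subset_leq_card/classS/subsetIl.
Qed.

Lemma index_center_le_gen H X m :
  <<X>>%g = H -> {in X, forall x, #|(x ^: H)%g| <= m} ->
  #|H : 'Z(H)|%g <= m ^ #|X|.
Proof.
move=> genX; have -> : 'Z(H)%g = 'C_H(X)%g by rewrite /center -[in RHS]cent_gen genX.
exact: index_cent_le.
Qed.

Lemma card_class_le_abelian_quotient H F x :
  H \subset 'N(F)%g -> abelian (H / F)%g -> x \in H -> #|(x ^: H)%g| <= #|F|.
Proof.
move=> nFH abHF xH; rewrite -(card_lcoset F x); apply: subset_leq_card.
apply/subsetP => _ /imsetP[h hH ->]; rewrite mem_lcoset conjg_mulR mulKg.
exact: subsetP (der1_min nFH abHF) _ (mem_commg xH hH).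
Qed.

Lemma generated_by_at_most_extension H F r s :
  (F <| H)%g -> generated_by_at_most (H / F)%g r -> generated_by_at_most F s ->
  generated_by_at_most H (r + s).
Proof.
move=> nsFH [X [cardX genX]] [Y [cardY genY]].
have [sFH nFH] := andP nsFH.
pose T := ((fun xb : coset_of F => repr xb) @: X)%g.
exists (T :|: Y); split.
  apply: leq_trans (leq_card_setU _ _) _.
  by rewrite leq_add // (leq_trans (leq_imset_card _ _)).
have sTH : T \subset H.
  apply/subsetP => _ /imsetP[xb xbX ->].
  have xbHF : xb \in (H / F)%g by rewrite -genX mem_gen.
  by rewrite -(quotientGK nsFH) mem_morphpre ?repr_coset_norm //= coset_reprK.
have sYH : Y \subset H by rewrite (subset_trans _ sFH) // -genY subset_gen.
apply/eqP; rewrite eqEsubset gen_subG subUset sTH sYH /=.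
have sFG : F \subset <<T :|: Y>>%g by rewrite -{1}genY genS // subsetUr.
rewrite -(quotientSGK nFH sFG) -genX gen_subG.
apply/subsetP => xb xbX; rewrite -(coset_reprK xb).
by apply/mem_quotient/mem_gen/setUP; left; apply: imset_f.
Qed.

Lemma index_center_le_abelian_quotient H F n :
  (F <| H)%g -> abelian (H / F)%g -> generated_by_at_most H n ->
  #|H : 'Z(H)|%g <= #|F| ^ n.
Proof.
move=> /andP[_ nFH] abHF [X [cardX genX]].
apply: leq_trans (leq_pexp2l (cardG_gt0 F) cardX).
apply: (index_center_le_gen genX) => x xX.
apply: card_class_le_abelian_quotient => //.
by rewrite -genX mem_gen.
Qed.

End CentreIndex.

Section PParts.

Variables (gT : finGroupType) (p : nat).
Implicit Types (G H P : {group gT}).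

Lemma partn_card_le_Sylow G H P :
  G \subset H -> (p.-Sylow(H) P)%g -> #|G|`_p <= #|P|.
Proof.
by move=> sGH sylP; rewrite (card_Hall sylP) dvdn_leq ?partn_dvd ?cardSg.
Qed.

Lemma index_pcore_p'_nil G : nilpotent G -> #|G : 'O_p^'(G)|%g = #|G|`_p.
Proof.
move=> nilG; have hallO := nilpotent_pcore_Hall p^' nilG.
apply/eqP; rewrite -(eqn_pmul2l (cardG_gt0 'O_p^'(G)%G)) Lagrange ?pcore_sub //.
by rewrite (card_Hall hallO) mulnC partnC.
Qed.

End PParts.

Lemma natrM_le_powR (R : realType) (B e : R) (a b c q h n : nat) :
  (0 <= B)%R -> (0 <= e)%R -> 0 < h ->
  (a%:R <= B * powR q%:R e)%R -> q <= h -> c <= a ^ n -> b <= h ->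
  ((c * b)%:R <= B ^+ n * powR h%:R (e * n%:R + 1))%R.
Proof.
move=> B0 e0 h0 leaq leqh leca lebh.
apply: le_trans (_ : ((a ^ n * b)%:R <= _)%R); first by rewrite ler_nat leq_mul.
have h0' : (0 < h%:R :> R)%R by rewrite ltr0n.
rewrite powRD ?lt0r_neq0 ?implybT // powRr1 ?ler0n // mulrA natrM.
apply: ler_pM => //; last by rewrite ler_nat.
rewrite powRrM powR_mulrn ?powR_ge0 // -exprMn natrX.
apply: lerXn2r; rewrite ?nnegrE ?mulr_ge0 ?powR_ge0 //.
apply: le_trans leaq _; apply: ler_wpM2l => //.
by apply: ge0_ler_powR; rewrite ?nnegrE ?ler_nat.
Qed.

Theorem lemma2p9 (R : realType) (p : nat) (gT : finGroupType)
    (H F : {group gT}) (r s : nat) (B e : R)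
    (Fp Hp : {group gT}) :
  prime p ->
  (F <| H)%g ->
  abelian (H / F)%g ->
  generated_by_at_most (H / F)%g r ->
  generated_by_at_most F s ->
  (0 < B)%R -> (0 < e)%R ->
  (p.-Sylow(F) Fp)%g ->
  (#|F|%:R <= B * powR (#|Fp|%:R) e)%R ->
  (p.-Sylow(H) Hp)%g ->
  exists A : {group gT},
    [/\ (A \char H)%g, abelian A, coprime #|A| p &
        (#|H : A|%g%:R <= B ^+ (r + s) * powR (#|Hp|%:R) (e * (r + s)%:R + 1))%R].
Proof.
move=> pr_p nsFH abHF genHF genF B_gt0 e_gt0 sylFp leF sylHp.
have sFH := normal_sub nsFH.
have genH := generated_by_at_most_extension nsFH genHF genF.
exists 'O_p^'('Z(H))%G; split.
- exact: char_trans (pcore_char _ _) (center_char _).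
- exact: abelianS (pcore_sub _ _) (center_abelian _).
- exact: p'nat_coprime (pcore_pgroup _ _) (pnat_id pr_p).
rewrite -(Lagrange_index (center_sub H) (pcore_sub _ _)) /=.
rewrite index_pcore_p'_nil ?abelian_nil ?center_abelian //.
apply: (natrM_le_powR (ltW B_gt0) (ltW e_gt0) (cardG_gt0 Hp) leF).
- by rewrite (card_Hall sylFp) (partn_card_le_Sylow sFH sylHp).
- exact: index_center_le_abelian_quotient nsFH abHF genH.
- exact: partn_card_le_Sylow (center_sub H) sylHp.
Qed.
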